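(* Let $\mathcal M=(M,<,+,0,\ldots)$ be a definably complete locally o-minimal expansion of an ordered group. Let $(X,\tau)$ be a definably compact definable topological space and $\{U_t: t\in P\}$ a definable family of definable open subsets of $X$ with $X=\bigcup_{t\in P}U_t$. Then there exists a definable bounded subset $Q$ of $P$ such that $X=\bigcup_{t\in Q}U_t$.
   Context: ''Definable'' means definable in $\mathcal M$ with parameters. $\mathcal M$ is an expansion of an ordered group with dense order without endpoints; locally o-minimal: for every definable $Y\subseteq M$ and $a\in M$ there is an open interval $I\ni a$ with $Y\cap I$ a finite union of points and open intervals; definably complete: every definable subset of $M$ has sup and inf in $M\cup\{\pm\infty\}$. A family $\{U_t:t\in P\}$ is definable if $P\subseteq M^n$ and $\bigcup_t\{t\}\times U_t$ are definable; ''bounded'' for $Q\subseteq P\subseteq M^n$ means bounded in $M^n$. A definable topological space is a definable set with a topology having a definable family as open base; it is definably compact if every definable filtered family (for any two members some member lies in their intersection) of nonempty closed subsets has nonempty intersection. *)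

From Stdlib Require List.
From mathcomp Require Import all_boot.
Set Implicit Arguments. Unset Strict Implicit. Unset Printing Implicit Defensive.

Section Defs.
Variable M : Type.

(* A subset of M^n is encoded as a predicate on seq M (which only holds on
   sequences of size n, see [structure_on]). *)
Definition pset := seq M -> Prop.

Definition ordered_group (lt : M -> M -> Prop) (add : M -> M -> M) (zero : M)
    (opp : M -> M) : Prop :=
  ((forall x y z, add x (add y z) = add (add x y) z) /\
  (forall x, add zero x = x /\ add x zero = x) /\
  (forall x, add (opp x) x = zero /\ add x (opp x) = zero) /\
  (forall x, ~ lt x x) /\
  (forall x y z, lt x y -> lt y z -> lt x z) /\
  (forall x y, lt x y \/ x = y \/ lt y x) /\
  (forall x y z, lt x y -> lt (add z x) (add z y) /\ lt (add x z) (add y z))).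

Definition dense_no_endpoints (lt : M -> M -> Prop) : Prop :=
  [/\ (forall x y, lt x y -> exists z, lt x z /\ lt z y),
      (forall x, exists y, lt y x)
    & (forall x, exists y, lt x y)].

(** A structure on M in the sense of van den Dries ("Tame topology and
    o-minimal structures", Ch. 1): [Def n A] means A is a (distinguished,
    i.e. definable) subset of M^n. *)
Definition structure_on (Def : nat -> pset -> Prop) : Prop :=
  ((forall n A, Def n A -> forall s, A s -> size s = n) /\
  (forall n, Def n (fun s => size s = n)) /\
  (forall n A, Def n A -> Def n (fun s => size s = n /\ ~ A s)) /\
  (forall n A B, Def n A -> Def n B -> Def n (fun s => A s \/ B s)) /\
  (forall n A, Def n A -> Def n.+1 (fun s => exists x t, s = x :: t /\ A t)) /\
  (forall n A, Def n A -> Def n.+1 (fun s => exists x t, s = rcons t x /\ A t)) /\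
  (forall m, Def m.+2 (fun s => exists x t, s = x :: rcons t x /\ size t = m)) /\
  (forall n A, Def n.+1 A -> Def n (fun t => exists x, A (rcons t x)))).

(** Definable sets (with parameters) of an expansion of (M,<,+) : a structure
    containing all singletons (parameters), the order and the graph of +. *)
Definition expansion_of_ordered_group (Def : nat -> pset -> Prop)
    (lt : M -> M -> Prop) (add : M -> M -> M) (zero : M) (opp : M -> M) : Prop :=
  [/\ ordered_group lt add zero opp,
      structure_on Def,
      (forall a, Def 1 (fun s => s = [:: a])),
      Def 2 (fun s => exists x y, s = [:: x; y] /\ lt x y)
    & Def 3 (fun s => exists x y, s = [:: x; y; add x y])].

Definition def1 (Def : nat -> pset -> Prop) (Y : M -> Prop) : Prop :=
  Def 1 (fun s => exists x, s = [:: x] /\ Y x).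

(** Open intervals with endpoints in M ∪ {±∞} (None = infinite endpoint). *)
Definition in_oint (lt : M -> M -> Prop) (lo hi : option M) (x : M) : Prop :=
  (match lo with Some l => lt l x | None => True end) /\
  (match hi with Some h => lt x h | None => True end).

Definition in_piece (lt : M -> M -> Prop) (p : M + (option M * option M))
    (x : M) : Prop :=
  match p with
  | inl a => x = a
  | inr (lo, hi) => in_oint lt lo hi x
  end.

Definition locally_o_minimal (Def : nat -> pset -> Prop) (lt : M -> M -> Prop)
    : Prop :=
  forall (Y : M -> Prop) (a : M), def1 Def Y ->
    exists b c, lt b a /\ lt a c /\
      exists ps : seq (M + (option M * option M)),
        forall x, (Y x /\ lt b x /\ lt x c) <-> (exists2 p, List.In p ps & in_piece lt p x).

Inductive ext := NInf | Fin of M | PInf.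

Definition ext_le (lt : M -> M -> Prop) (u v : ext) : Prop :=
  match u, v with
  | NInf, _ => True
  | _, PInf => True
  | Fin x, Fin y => lt x y \/ x = y
  | _, _ => False
  end.

Definition has_sup (lt : M -> M -> Prop) (Y : M -> Prop) : Prop :=
  exists s : ext, (forall y, Y y -> ext_le lt (Fin y) s) /\
    (forall u : ext, (forall y, Y y -> ext_le lt (Fin y) u) -> ext_le lt s u).

Definition has_inf (lt : M -> M -> Prop) (Y : M -> Prop) : Prop :=
  exists s : ext, (forall y, Y y -> ext_le lt s (Fin y)) /\
    (forall u : ext, (forall y, Y y -> ext_le lt u (Fin y)) -> ext_le lt u s).

Definition definably_complete (Def : nat -> pset -> Prop) (lt : M -> M -> Prop)
    : Prop :=
  forall Y : M -> Prop, def1 Def Y -> has_sup lt Y /\ has_inf lt Y.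

(** Definable family {U_t : t ∈ P} with P ⊆ M^k, U_t ⊆ M^n:
    P and ⋃_t {t} × U_t are definable. *)
Definition def_family (Def : nat -> pset -> Prop) (k n : nat) (P : pset)
    (U : seq M -> pset) : Prop :=
  Def k P /\
  Def (k + n) (fun s => size s = k + n /\ P (take k s) /\ U (take k s) (drop k s)).

(** Definable topological space: a definable X ⊆ M^n together with a
    definable family {V_b : b ∈ B} (B ⊆ M^m) of subsets of X which is a base
    of a topology on X; the topology is the one generated by this base. *)
Definition def_top_space (Def : nat -> pset -> Prop) (n : nat) (X : pset)
    (m : nat) (B : pset) (V : seq M -> pset) : Prop :=
  [/\ Def n X,
      def_family Def m n B V,
      (forall b x, B b -> V b x -> X x),
      (forall x, X x -> exists b, B b /\ V b x)
    & (forall b1 b2 x, B b1 -> B b2 -> V b1 x -> V b2 x ->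
         exists b3, [/\ B b3, V b3 x & forall y, V b3 y -> V b1 y /\ V b2 y])].

Definition is_open (X : pset) (B : pset) (V : seq M -> pset) (O : pset) : Prop :=
  (forall x, O x -> X x) /\
  (forall x, O x -> exists b, [/\ B b, V b x & forall y, V b y -> O y]).

Definition is_closed (X : pset) (B : pset) (V : seq M -> pset) (C : pset) : Prop :=
  (forall x, C x -> X x) /\ is_open X B V (fun x => X x /\ ~ C x).

Definition definably_compact (Def : nat -> pset -> Prop) (n : nat) (X : pset)
    (B : pset) (V : seq M -> pset) : Prop :=
  forall (k : nat) (P : pset) (C : seq M -> pset),
    def_family Def k n P C ->
    (exists t, P t) ->
    (forall t, P t -> is_closed X B V (C t) /\ exists x, C t x) ->
    (forall t1 t2, P t1 -> P t2 ->
       exists t3, P t3 /\ forall x, C t3 x -> C t1 x /\ C t2 x) ->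
    exists x, X x /\ forall t, P t -> C t x.

Definition bounded (lt : M -> M -> Prop) (Q : pset) : Prop :=
  exists a b : M, forall s, Q s -> forall x, List.In x s ->
    ((lt a x \/ a = x) /\ (lt x b \/ x = b)).

End Defs.

(* Suppose no box [a,b]^k of parameters yields a subcover. Then the sets C_(a,b)
   of points of X not covered by the U_t with t in [a,b]^k form a definable
   family, indexed by M^2, of nonempty closed sets; it is filtered because two
   boxes lie in a common larger one. Definable compactness gives a point x in
   every C_(a,b), but x lies in some U_t and t lies in some box. So a box
   [a,b]^k works, and Q is P cut down to it. *)

From mathcomp Require Import all_boot zify.
From Stdlib Require Import Classical FunctionalExtensionality PropExtensionality.
Set Implicit Arguments. Unset Strict Implicit. Unset Printing Implicit Defensive.

Definition lte (M : Type) (lt : M -> M -> Prop) (x y : M) : Prop := lt x y \/ x = y.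

Definition in_box (M : Type) (lt : M -> M -> Prop) (a b : M) (u : seq M) : Prop :=
  forall x, List.In x u -> lte lt a x /\ lte lt x b.

Section Order.
Variables (M : Type) (lt : M -> M -> Prop).
Hypothesis lt_trans : forall x y z, lt x y -> lt y z -> lt x z.
Hypothesis lt_total : forall x y, lt x y \/ x = y \/ lt y x.

Lemma lte_trans x y z : lte lt x y -> lte lt y z -> lte lt x z.
Proof. by move=> [xy|->] // [yz|<-]; [left; apply: lt_trans yz|left]. Qed.

Lemma lte_total x y : lte lt x y \/ lte lt y x.
Proof. by case: (lt_total x y) => [xy|[->|yx]]; [left; left|left; right|right; left]. Qed.

Lemma in_box_widen a b a' b' u :
  lte lt a' a -> lte lt b b' -> in_box lt a b u -> in_box lt a' b' u.
Proof.
move=> a'a bb' box x /box [ax xb].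
by split; [apply: lte_trans a'a ax|apply: lte_trans xb bb'].
Qed.

Lemma in_box_nth (x0 a b : M) u :
  in_box lt a b u <->
  forall l, l < size u -> lte lt a (nth x0 u l) /\ lte lt (nth x0 u l) b.
Proof.
elim: u => [|y u IH]; first by split=> // _ x [].
split=> [box [|l] /= lu|box x [<-|xu]].
- by apply: box; left.
- by move: l lu; apply/IH => x xu; apply: box; right.
- exact: (box 0).
- by move: x xu; apply/IH => l lu; apply: (box l.+1).
Qed.

End Order.

Lemma exists_lower_bound (T : Type) (R : T -> T -> Prop) (x0 : T) :
  (forall x y z, R x y -> R y z -> R x z) -> (forall x y, R x y \/ R y x) ->
  forall s, exists a, forall x, List.In x s -> R a x.
Proof.
move=> R_trans R_total; elim=> [|y s [a lb]]; first by exists x0.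
case: (R_total a y) => [ay|ya].
- by exists a => x [<-|/lb].
- exists y => x [<-|/lb]; last exact: R_trans.
  by case: (R_total y y).
Qed.

Section Definability.
Variables (M : Type) (Def : nat -> pset M -> Prop).
Hypothesis HS : structure_on Def.

(* Unlike [Def p], [definable p] only looks at sequences of length p. *)
Definition definable (p : nat) (phi : seq M -> Prop) : Prop :=
  Def p (fun s => size s = p /\ phi s).

Lemma Def_ext p (A A' : pset M) : Def p A -> (forall s, A s <-> A' s) -> Def p A'.
Proof.
move=> DA AA'; suff -> : A' = A by [].
apply: functional_extensionality => s; apply: propositional_extensionality.
by split=> /AA'.
Qed.

Lemma Def_size p A s : Def p A -> A s -> size s = p.
Proof. by case: HS => sizeP _ DA; apply: sizeP DA s. Qed.

Lemma Def_definable_ext p A phi :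
  Def p A -> (forall s, size s = p -> A s <-> phi s) -> definable p phi.
Proof.
move=> DA Aphi; apply: (Def_ext DA) => s.
split=> [As | [sp /(Aphi _ sp)//]].
by have sp := Def_size DA As; split=> //; apply/Aphi.
Qed.

Lemma definable_Def p A : Def p A -> definable p A.
Proof. by move=> DA; apply: Def_definable_ext DA _. Qed.

Lemma Def_definable p phi :
  definable p phi -> (forall s, phi s -> size s = p) -> Def p phi.
Proof. by move=> Dphi phi_size; apply: (Def_ext Dphi) => s; split=> [[]|?]; auto. Qed.

Lemma definable_ext p phi psi :
  definable p phi -> (forall s, size s = p -> phi s <-> psi s) -> definable p psi.
Proof.
move=> Dphi phipsi; apply: Def_definable_ext Dphi _ => s sp.
by split=> [[_ /phipsi]|/phipsi]; auto.
Qed.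

Lemma definable_true p : definable p (fun _ => True).
Proof.
case: HS => _ [Dall _].
by apply: Def_definable_ext (Dall p) _.
Qed.

Lemma definable_not p phi : definable p phi -> definable p (fun s => ~ phi s).
Proof.
case: HS => _ [_ [Dcompl _]] Dphi.
apply: Def_definable_ext (Dcompl _ _ Dphi) _ => s sp.
by split=> [[_ nphi] phis|nphi]; [apply: nphi|split=> // -[]].
Qed.

Lemma definable_or p phi psi :
  definable p phi -> definable p psi -> definable p (fun s => phi s \/ psi s).
Proof.
case: HS => _ [_ [_ [Dunion _]]] Dphi Dpsi.
by apply: Def_definable_ext (Dunion _ _ _ Dphi Dpsi) _ => s sp; split=> [[[]|[]]|[]]; auto.
Qed.

Lemma definable_and p phi psi :
  definable p phi -> definable p psi -> definable p (fun s => phi s /\ psi s).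
Proof.
move=> Dphi Dpsi.
have := definable_not (definable_or (definable_not Dphi) (definable_not Dpsi)).
move/definable_ext; apply.
by move=> s _; split=> [/not_or_and [/NNPP ? /NNPP ?] | [? ?] []].
Qed.

Lemma definable_all_ltn p K (phi : nat -> seq M -> Prop) :
  (forall l, l < K -> definable p (phi l)) ->
  definable p (fun s => forall l, l < K -> phi l s).
Proof.
elim: K => [|K IH] Dphi.
  by apply: definable_ext (definable_true p) _.
apply: definable_ext (definable_and (IH _) (Dphi K (ltnSn K))) _ => [l lK|s _].
  exact/Dphi/ltnW.
split=> [[phi_lt phiK] l|phi_le]; last by split=> [l /ltnW|]; apply: phi_le.
by rewrite ltnS leq_eqVlt => /orP [/eqP ->|]; [|apply: phi_lt].
Qed.

Lemma definable_exists_rcons p phi :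
  definable p.+1 phi -> definable p (fun s => exists x, phi (rcons s x)).
Proof.
case: HS => _ [_ [_ [_ [_ [_ [_ Dproj]]]]]] Dphi.
apply: Def_definable_ext (Dproj _ _ Dphi) _ => s sp.
by split=> [[x [_ ?]]|[x ?]]; exists x; rewrite ?size_rcons ?sp.
Qed.

Lemma definable_exists_cat p j phi :
  definable (p + j) phi -> definable p (fun s => exists z, size z = j /\ phi (s ++ z)).
Proof.
elim: j phi => [|j IH] phi Dphi.
  rewrite addn0 in Dphi; apply: definable_ext Dphi _ => s _.
  by split=> [?|[z [/size0nil -> ]]]; [exists [::]|]; rewrite cats0.
rewrite addnS in Dphi; apply: definable_ext (IH _ (definable_exists_rcons Dphi)) _ => s _.
split=> [[z [zj [x ?]]]|[z []]]; first by exists (rcons z x); rewrite size_rcons zj -rcons_cat.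
case/lastP: z => [//|z x]; rewrite size_rcons => -[zj] ?.
by exists z; split=> //; exists x; rewrite rcons_cat.
Qed.

Lemma definable_drop n j phi :
  definable n phi -> definable (j + n) (fun s => phi (drop j s)).
Proof.
case: HS => _ [_ [_ [_ [Dcons _]]]].
elim: j => [|j IH] Dphi; first by apply: definable_ext Dphi _ => s _; rewrite drop0.
apply: Def_definable_ext (Dcons _ _ (IH Dphi)) _ => -[|x t] //= [tn].
by split=> [[y [t' [[_ ->] [_ ?]]]]|?]; last by exists x, t.
Qed.

Lemma definable_take n j phi :
  definable n phi -> definable (n + j) (fun s => phi (take n s)).
Proof.
case: HS => _ [_ [_ [_ [_ [Drcons _]]]]].
elim: j => [|j IH] Dphi.
  by rewrite addn0; apply: definable_ext Dphi _ => s sn; rewrite take_oversize ?sn.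
rewrite addnS; apply: Def_definable_ext (Drcons _ _ (IH Dphi)) _.
case/lastP=> [//|t x]; rewrite size_rcons => -[tn].
have take_t : take n (rcons t x) = take n t by rewrite -cats1 takel_cat // tn leq_addr.
rewrite take_t; split=> [[y [t' [E [_ ?]]]]|?]; last by exists x, t.
by move/rcons_inj: E => [-> _].
Qed.

Variable x0 : M.

Lemma definable_nth_eq i j p :
  i < p -> j < p -> definable p (fun s => nth x0 s i = nth x0 s j).
Proof.
wlog ij : i j / i < j.
  move=> gen ip jp; case: (ltngtP i j) => [ij|ji|->]; first exact: gen.
    by apply: definable_ext (gen _ _ ji jp ip) _ => s _; split.
  by apply: definable_ext (definable_true p) _.
move=> ip; have [m ->] : exists m, j = i + m.+1 by exists (j - i).-1; lia.
move=> jp.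
have Ddiag : definable m.+2 (fun s => nth x0 s 0 = nth x0 s m.+1).
  case: HS => _ [_ [_ [_ [_ [_ [Ddiag _]]]]]].
  apply: Def_definable_ext (Ddiag m) _ => -[//|x t] /= [].
  case/lastP: t => [//|t y]; rewrite size_rcons => -[tm].
  rewrite nth_rcons tm ltnn eqxx; split=> [[x' [t' [[-> E] _]]]|->]; last by exists y, t.
  by move/rcons_inj: E => [_ ->].
have := definable_take (p - (i + m.+2)) (definable_drop i Ddiag).
have -> : i + m.+2 + (p - (i + m.+2)) = p by lia.
by move/definable_ext; apply=> s sp; rewrite !nth_drop !nth_take ?addn0 //; lia.
Qed.

Lemma definable_map_nth n p (sg : seq nat) phi :
  definable n phi -> size sg = n -> (forall i, i \in sg -> i < p) ->
  definable p (fun s => phi (map (nth x0 s) sg)).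
Proof.
move=> Dphi sgn sgp.
have Dcopy : definable (p + n)
    (fun w => forall l, l < n -> nth x0 w (nth 0 sg l) = nth x0 w (p + l)).
  apply: definable_all_ltn => l ln; apply: definable_nth_eq; last by rewrite ltn_add2l.
  by apply/ltn_addr/sgp/mem_nth; rewrite sgn.
apply: definable_ext (definable_exists_cat (definable_and (definable_drop p Dphi) Dcopy)) _.
move=> s sp; have nth_sz z l : nth x0 (s ++ z) (p + l) = nth x0 z l.
  by rewrite nth_cat sp ltnNge leq_addr addKn.
have nth_sg z l : l < n -> nth x0 (s ++ z) (nth 0 sg l) = nth x0 s (nth 0 sg l).
  by move=> ln; rewrite nth_cat sp sgp // mem_nth ?sgn.
split=> [[z [zn [phiz copy]]]|phis].
  suff -> : map (nth x0 s) sg = z by rewrite drop_size_cat in phiz.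
  apply: (@eq_from_nth _ x0); rewrite size_map sgn // => l ln.
  by rewrite (nth_map 0) ?sgn // -(nth_sg z) // copy // nth_sz.
exists (map (nth x0 s) sg); rewrite size_map sgn drop_size_cat //.
by split=> [//|]; split=> // l ln; rewrite nth_sz nth_sg // (nth_map 0) ?sgn.
Qed.

Hypothesis Dsingleton : forall a, Def 1 (fun s => s = [:: a]).

Lemma definable_nth_const a i p : i < p -> definable p (fun s => nth x0 s i = a).
Proof.
move=> ip; have Da : definable 1 (fun s => nth x0 s 0 = a).
  by apply: Def_definable_ext (Dsingleton a) _ => -[|y [|]] //= _; split=> [[]|->].
apply: definable_ext (definable_map_nth Da (sg := [:: i]) erefl _) _ => //.
by move=> l; rewrite inE => /eqP ->.
Qed.

Lemma definable_fix_suffix p z phi :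
  definable (p + size z) phi -> definable p (fun s => phi (s ++ z)).
Proof.
move=> Dphi.
have Dz : definable (p + size z)
    (fun w => forall l, l < size z -> nth x0 w (p + l) = nth x0 z l).
  by apply: definable_all_ltn => l lz; apply: definable_nth_const; rewrite ltn_add2l.
apply: definable_ext (definable_exists_cat (definable_and Dphi Dz)) _ => s sp.
split=> [[z' [z'z [phiz' eqz]]]|phiz]; last first.
  by exists z; split=> //; split=> // l _; rewrite nth_cat sp ltnNge leq_addr addKn.
suff <- : z' = z by [].
apply: (@eq_from_nth _ x0) => [//|l lz']; rewrite -eqz -?z'z //.
by rewrite nth_cat sp ltnNge leq_addr addKn.
Qed.

End Definability.

Lemma is_closed_diff_bigcup (M : Type) (X B : pset M) (V : seq M -> pset M)
    (I : pset M) (W : seq M -> pset M) :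
  (forall i, I i -> is_open X B V (W i)) ->
  is_closed X B V (fun x => X x /\ ~ exists i, I i /\ W i x).
Proof.
move=> W_open; split=> [x []//|]; split=> [x []//|x [Xx notC]].
have [i [Ii Wix]] : exists i, I i /\ W i x by apply: NNPP => nW; apply: notC.
have [WX /(_ x Wix) [b [Bb Vbx VbW]]] := W_open i Ii.
exists b; split=> // y /VbW Wiy; split; first exact: WX.
by case=> _; apply; exists i.
Qed.

Section BoxCover.
Variables (M : Type) (Def : nat -> pset M -> Prop) (lt : M -> M -> Prop) (x0 : M).
Hypothesis HS : structure_on Def.
Hypothesis Dlt : Def 2 (fun s => exists x y, s = [:: x; y] /\ lt x y).
Hypothesis lt_trans : forall x y z, lt x y -> lt y z -> lt x z.
Hypothesis lt_total : forall x y, lt x y \/ x = y \/ lt y x.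

Lemma definable_nth_lt i j p :
  i < p -> j < p -> definable Def p (fun s => lt (nth x0 s i) (nth x0 s j)).
Proof.
move=> ip jp; have Dlt01 : definable Def 2 (fun s => lt (nth x0 s 0) (nth x0 s 1)).
  apply: (Def_definable_ext HS Dlt) => -[|x [|y [|]]] //= _.
  by split=> [[x' [y' [[-> ->]]]]|]; last by exists x, y.
apply: (definable_ext HS (definable_map_nth HS x0 Dlt01 (sg := [:: i; j]) erefl _)) => //.
by move=> l; rewrite !inE => /orP [] /eqP ->.
Qed.

Lemma definable_nth_lte i j p :
  i < p -> j < p -> definable Def p (fun s => lte lt (nth x0 s i) (nth x0 s j)).
Proof.
move=> ip jp.
exact: (definable_or HS (definable_nth_lt ip jp) (definable_nth_eq HS x0 ip jp)).
Qed.

Lemma definable_in_box i j off k p :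
  i < p -> j < p -> off + k <= p ->
  definable Def p (fun s => in_box lt (nth x0 s i) (nth x0 s j) (take k (drop off s))).
Proof.
move=> ip jp offkp.
have Dbox : definable Def p (fun s => forall l, l < k ->
    lte lt (nth x0 s i) (nth x0 s (off + l)) /\ lte lt (nth x0 s (off + l)) (nth x0 s j)).
  apply: (definable_all_ltn HS) => l lk.
  by apply: (definable_and HS); apply: definable_nth_lte; lia.
apply: (definable_ext HS Dbox) => s sp.
have sz : size (take k (drop off s)) = k by rewrite size_takel // size_drop sp; lia.
rewrite (in_box_nth _ x0) sz.
by split=> box l lk; move: (box l lk); rewrite nth_take // nth_drop.
Qed.

Hypothesis Dsingleton : forall a, Def 1 (fun s => s = [:: a]).

Lemma Def_in_box_restriction k P a b :
  Def k P -> Def k (fun t => P t /\ in_box lt a b t).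
Proof.
move=> DP; have Dbox : definable Def (k + size [:: a; b])
    (fun s => in_box lt (nth x0 s k) (nth x0 s k.+1) (take k (drop 0 s))).
  by apply: definable_in_box; rewrite /=; lia.
have Dab := definable_fix_suffix HS x0 Dsingleton Dbox.
have Drestr : definable Def k (fun t => P t /\ in_box lt a b t).
  apply: (definable_ext HS (definable_and HS (definable_Def HS DP) Dab)) => t tk.
  by rewrite drop0 take_size_cat // !nth_cat tk ltnn subnn ltnNge leqnSn subSnn.
by apply: (Def_definable Drestr) => t [Pt _]; apply: (Def_size HS DP Pt).
Qed.

Lemma definable_covered_by_box n k P U :
  def_family Def k n P U ->
  definable Def (2 + n) (fun s =>
    exists u, (P u /\ in_box lt (nth x0 s 0) (nth x0 s 1) u) /\ U u (drop 2 s)).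
Proof.
move=> [DP DU].
(* Coordinates are laid out as (t, x, u) with t in M^2, x in M^n, u in M^k. *)
have DPU : definable Def (2 + n + k) (fun w =>
    P (take k (drop (2 + n) w)) /\ U (take k (drop (2 + n) w)) (take n (drop 2 w))).
  have sg_size : size (iota (2 + n) k ++ iota 2 n) = k + n.
    by rewrite size_cat !size_iota.
  have sg_bound i : i \in iota (2 + n) k ++ iota 2 n -> i < 2 + n + k.
    by rewrite mem_cat !mem_iota; lia.
  apply: (definable_ext HS (definable_map_nth HS x0 DU sg_size sg_bound)) => w wsz.
  rewrite map_cat !map_nth_iota ?wsz; try lia.
  have uk : size (take k (drop (2 + n) w)) = k by rewrite size_takel // size_drop wsz; lia.
  by rewrite (take_size_cat _ uk) (drop_size_cat _ uk).
have Dcov := definable_and HS DPU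
  (@definable_in_box 0 1 (2 + n) k (2 + n + k) erefl erefl (leqnn _)).
apply: (definable_ext HS (definable_exists_cat HS Dcov)) => s ssz.
have drop_sz z : drop (2 + n) (s ++ z) = z by rewrite drop_size_cat.
have drop2 z : take n (drop 2 (s ++ z)) = drop 2 s.
  rewrite -{1}(cat_take_drop 2 s) -catA drop_size_cat ?size_takel ?ssz ?leq_addr //.
  by rewrite take_size_cat // size_drop ssz addKn.
have nth_sz z i : i < 2 -> nth x0 (s ++ z) i = nth x0 s i.
  by move=> i2; rewrite nth_cat ssz ltn_addr.
rewrite -/(2 + n); split=> [[z [zk [[Pz Uz] box]]]|[u [[Pu box] Uu]]].
  by exists z; move: Pz Uz box; rewrite drop_sz -zk take_size drop2 !nth_sz.
have uk := Def_size HS DP Pu.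
by exists u; rewrite drop_sz -uk take_size drop2 !nth_sz.
Qed.

Definition uncovered (X P : pset M) (U : seq M -> pset M) (a b : M) : pset M :=
  fun x => X x /\ ~ exists u, (P u /\ in_box lt a b u) /\ U u x.

Lemma def_family_uncovered n X k P U :
  Def n X -> def_family Def k n P U ->
  def_family Def 2 n (fun t => size t = 2)
    (fun t => uncovered X P U (nth x0 t 0) (nth x0 t 1)).
Proof.
move=> DX DU; split; first by case: HS => _ [Dall _]; apply: Dall.
have Dunc := definable_and HS (definable_drop HS 2 (definable_Def HS DX))
  (definable_not HS (definable_covered_by_box DU)).
apply: (definable_ext HS Dunc) => s ssz.
have t2 : size (take 2 s) = 2 by rewrite size_takel // ssz leq_addr.
by rewrite /uncovered !nth_take //; split=> [|[]].
Qed.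

Lemma uncovered_widen X P U a b a' b' x :
  lte lt a' a -> lte lt b b' -> uncovered X P U a' b' x -> uncovered X P U a b x.
Proof.
move=> a'a bb' [Xx no_cover]; split=> // -[u [[Pu box] Uux]].
by apply: no_cover; exists u; split=> //; split=> //; apply: in_box_widen box.
Qed.

Lemma definably_compact_box_cover n X B V k P U :
  Def n X -> definably_compact Def n X B V -> def_family Def k n P U ->
  (forall t, P t -> is_open X B V (U t)) -> (forall x, X x -> exists t, P t /\ U t x) ->
  exists a b, forall x, X x -> exists t, (P t /\ in_box lt a b t) /\ U t x.
Proof.
move=> DX X_compact DU U_open U_cover; apply: NNPP => no_box_cover.
pose C t := uncovered X P U (nth x0 t 0) (nth x0 t 1).
have lower := exists_lower_bound x0 (lte_trans lt_trans) (lte_total lt_total).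
have upper := exists_lower_bound (R := fun x y => lte lt y x) x0
  (fun x y z yx zy => lte_trans lt_trans zy yx) (fun x y => lte_total lt_total y x).
have C_closed t : size t = 2 -> is_closed X B V (C t) /\ exists x, C t x.
  move=> _; split; first by apply: is_closed_diff_bigcup => u [Pu _]; apply: U_open.
  apply: NNPP => C_empty; apply: no_box_cover; exists (nth x0 t 0), (nth x0 t 1) => x Xx.
  by apply: NNPP => not_covered; apply: C_empty; exists x.
have C_filtered t1 t2 : size t1 = 2 -> size t2 = 2 ->
    exists t3, size t3 = 2 /\ forall x, C t3 x -> C t1 x /\ C t2 x.
  move=> _ _; have [a lb] := lower [:: nth x0 t1 0; nth x0 t2 0].
  have [b ub] := upper [:: nth x0 t1 1; nth x0 t2 1].
  exists [:: a; b]; split=> // x Cx.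
  by split; apply: uncovered_widen Cx; [apply: lb|apply: ub|apply: lb|apply: ub]; simpl; tauto.
have [x [Xx Cx]] := X_compact _ _ _ (def_family_uncovered DX DU)
  (ex_intro _ [:: x0; x0] erefl) C_closed C_filtered.
have [u [Pu Uux]] := U_cover x Xx; have [a au] := lower u; have [b ub] := upper u.
by case: (Cx [:: a; b] erefl) => _; apply; exists u; split=> //; split=> // y /[dup] /au ? /ub.
Qed.

End BoxCover.

Theorem theorem4p22 (M : Type) (Def : nat -> pset M -> Prop)
    (lt : M -> M -> Prop) (add : M -> M -> M) (zero : M) (opp : M -> M) :
  expansion_of_ordered_group Def lt add zero opp ->
  dense_no_endpoints lt ->
  locally_o_minimal Def lt ->
  definably_complete Def lt ->
  forall (n : nat) (X : pset M) (m : nat) (B : pset M) (V : seq M -> pset M),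
  def_top_space Def n X m B V ->
  definably_compact Def n X B V ->
  forall (k : nat) (P : pset M) (U : seq M -> pset M),
  def_family Def k n P U ->
  (forall t, P t -> is_open X B V (U t)) ->
  (forall x, X x -> exists t, P t /\ U t x) ->
  exists Q : pset M,
    [/\ Def k Q, (forall t, Q t -> P t), bounded lt Q
      & forall x, X x -> exists t, Q t /\ U t x].
Proof.
move=> [[_ [_ [_ [_ [lt_trans [lt_total _]]]]]] HS Dsingleton Dlt _] _ _ _
  n X m B V [DX _ _ _ _] X_compact k P U DU U_open U_cover.
have [a [b box_cover]] := definably_compact_box_cover zero HS Dlt lt_trans lt_total
  DX X_compact DU U_open U_cover.
exists (fun t => P t /\ in_box lt a b t); split.
- exact: (Def_in_box_restriction zero HS Dlt Dsingleton a b DU.1).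
- by move=> t [].
- by exists a, b => t [].
- by move=> x /box_cover [t]; exists t.
Qed.
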